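(* Let $\Gamma$ be a linear group, i.e. a group isomorphic to a subgroup of $GL_n(\mathbf k)$ for some field $\mathbf k$ and some $n$. Assume that $\Gamma$ is finite-by-abelian, i.e. $\Gamma$ has a finite normal subgroup $N$ such that $\Gamma/N$ is abelian. Then $\Gamma$ is virtually abelian, i.e. $\Gamma$ has an abelian subgroup of finite index. *)

From mathcomp Require Import all_boot all_algebra.
Set Implicit Arguments. Unset Strict Implicit. Unset Printing Implicit Defensive.
Import GRing.Theory.
Local Open Scope ring_scope.

Section LinGroups.
Variables (k : fieldType) (n : nat).
Implicit Types (G H N : 'M[k]_n -> Prop).

Definition subgroup_GL G : Prop :=
  [/\ G 1%:M,
      (forall A, G A -> A \in unitmx),
      (forall A B, G A -> G B -> G (A *m B)) &
      (forall A, G A -> G (invmx A))].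

Definition subgroup_of H G : Prop :=
  subgroup_GL H /\ (forall A, H A -> G A).

Definition finite_set (S : 'M[k]_n -> Prop) : Prop :=
  exists s : seq 'M[k]_n, forall A, S A -> A \in s.

Definition normal_in N G : Prop :=
  subgroup_of N G /\
  (forall g x, G g -> N x -> N (invmx g *m x *m g)).

(* G / N is abelian: for all g h in G, the cosets (gN)(hN) = ghN and
   (hN)(gN) = hgN coincide, i.e. (hg)^-1 (gh) lies in N. *)
Definition quotient_abelian G N : Prop :=
  forall g h, G g -> G h -> N (invmx (h *m g) *m (g *m h)).

Definition finite_by_abelian G : Prop :=
  exists N, [/\ normal_in N G, finite_set N & quotient_abelian G N].

Definition abelian_set H : Prop :=
  forall A B, H A -> H B -> A *m B = B *m A.

Definition finite_index H G : Prop :=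
  exists s : seq 'M[k]_n,
    (forall r, r \in s -> G r) /\
    (forall g, G g -> exists2 r, r \in s & H (invmx r *m g)).

Definition virtually_abelian G : Prop :=
  exists H, [/\ subgroup_of H G, abelian_set H & finite_index H G].

End LinGroups.

From mathcomp Require Import all_boot all_algebra.
From Stdlib Require Import Classical.
Set Implicit Arguments. Unset Strict Implicit. Unset Printing Implicit Defensive.
Import GRing.Theory.
Local Open Scope ring_scope.

(* Every element x of G has finitely many conjugates, since g x g^-1 = x a with
   a = x^-1 g x g^-1 in the finite set N.  The
   linear span of G is finite
   dimensional, so it is spanned by finitely many x_1, ..., x_m in G, and the
   center of G is the kernel of the action g |-> (g x_i g^-1)_i of G, which has
   finitely many values; hence the center is an abelian subgroup of finite
   index. *)

Lemma exists_spanning_seq (K : fieldType) (vT : vectType K) (S : vT -> Prop) :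
  exists2 X : seq vT, (forall x, x \in X -> S x) & (forall v, S v -> v \in <<X>>%VS).
Proof.
apply: NNPP => noX.
have grow m : exists2 X : seq vT, (forall x, x \in X -> S x) & (m <= \dim <<X>>)%N.
  elim: m => [|m [X XS leX]]; first by exists [::].
  have [v Sv vX] : exists2 v, S v & v \notin <<X>>%VS.
    apply: NNPP => none; apply: noX; exists X => // v Sv.
    by apply: NNPP => vX; apply: none; exists v => //; apply/negP.
  exists (v :: X); first by move=> x; rewrite in_cons => /predU1P [->|/XS].
  have subX : (<<X>> <= <<v :: X>>)%VS by rewrite span_cons addvSr.
  apply: leq_ltn_trans leX _; rewrite (ltn_leqif (dimv_leqif_eq subX)).
  by apply: contraNneq vX => ->; rewrite memv_span ?mem_head.
have [X _] := grow (dim vT).+1.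
by rewrite ltnNge -dimvf dimvS ?subvf.
Qed.

Lemma finite_image_map (W : Type) (U V : eqType) (D : W -> Prop) (F : W -> U -> V)
    (X : seq U) :
  (forall x, x \in X -> exists s : seq V, forall w, D w -> F w x \in s) ->
  exists P : seq (seq V), forall w, D w -> map (F w) X \in P.
Proof.
elim: X => [|x X IH] finF; first by exists [:: [::]].
have [s Fs] := finF x (mem_head x X).
have [P FP] : exists P : seq (seq V), forall w, D w -> map (F w) X \in P.
  by apply: IH => y yX; apply: finF; rewrite in_cons yX orbT.
exists [seq y :: t | y <- s, t <- P] => w Dw.
exact: allpairs_f (Fs w Dw) (FP w Dw).
Qed.

Lemma exists_representatives (A T : eqType) (D : A -> Prop) (f : A -> T) (ts : seq T) :
  exists2 r : seq A, (forall b, b \in r -> D b) &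
    (forall a, D a -> f a \in ts -> exists2 b, b \in r & f b = f a).
Proof.
elim: ts => [|t ts [r rD rep]]; first by exists [::].
have [[a0 [Da0 fa0]] | no_t] := classic (exists a, D a /\ f a = t).
  exists (a0 :: r); first by move=> b; rewrite in_cons => /predU1P [->|/rD].
  move=> a Da; rewrite in_cons => /predU1P [->|fa].
    by exists a0; rewrite ?mem_head.
  by have [b br fb] := rep a Da fa; exists b; rewrite ?in_cons ?br ?orbT.
exists r => // a Da; rewrite in_cons => /predU1P [fa|]; last exact: rep.
by case: no_t; exists a.
Qed.

Section LinearGroups.
Variables (k : fieldType) (n : nat).
Implicit Types (G N : 'M[k]_n -> Prop) (A B b g x : 'M[k]_n).

Lemma invmxM A B : A \in unitmx -> B \in unitmx ->
  invmx (A *m B) = invmx B *m invmx A.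
Proof.
move=> uA uB.
have uAB : A *m B \in unitmx by rewrite unitmx_mul uA uB.
have AB_inv : (A *m B) *m (invmx B *m invmx A) = 1%:M.
  by rewrite -mulmxA (mulKVmx uB) mulmxV.
by rewrite -[invmx (A *m B)]mulmx1 -AB_inv mulmxA mulVmx // mul1mx.
Qed.

Lemma comm_mx_span A (X : seq 'M[k]_n) B :
  (forall x, x \in X -> comm_mx A x) -> B \in <<X>>%VS -> comm_mx A B.
Proof.
move=> AX /(@coord_span _ _ _ (in_tuple X)) ->; apply: comm_mx_sum => i _.
by rewrite /comm_mx -scalemxAl -scalemxAr AX ?mem_nth.
Qed.

Lemma conj_eq_comm_mx b g x : b \in unitmx -> g \in unitmx ->
  b *m x *m invmx b = g *m x *m invmx g -> comm_mx (invmx b *m g) x.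
Proof.
move=> ub ug eq_conj.
rewrite /comm_mx -mulmxA -[g *m x](mulmxKV ug) -eq_conj.
by rewrite !mulmxA (mulVmx ub) mul1mx.
Qed.

Definition center_of G A : Prop := G A /\ (forall B, G B -> comm_mx A B).

Definition finite_conjugates G x : Prop :=
  exists s : seq 'M[k]_n, forall g, G g -> g *m x *m invmx g \in s.

Lemma center_subgroup G : subgroup_GL G -> subgroup_of (center_of G) G.
Proof.
move=> [G1 Gu GM GV]; split; last by move=> A [].
split.
- by split=> // B _; apply: comm1mx.
- by move=> A [/Gu].
- move=> A B [GA cA] [GB cB]; split=> [|C GC]; first exact: GM.
  by apply/comm_mx_sym/comm_mxM; apply/comm_mx_sym; [apply: cA | apply: cB].
- move=> A [GA cA]; split=> [|B GB]; first exact: GV.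
  have uA := Gu A GA.
  rewrite /comm_mx -[LHS](mulmxK uA) -(mulmxA (invmx A)) -cA //.
  by rewrite mulmxA (mulVmx uA) mul1mx.
Qed.

Lemma center_abelian G : abelian_set (center_of G).
Proof. by move=> A B [_ cA] [GB _]; apply: cA. Qed.

Lemma center_finite_index G : subgroup_GL G ->
  (forall x, G x -> finite_conjugates G x) -> finite_index (center_of G) G.
Proof.
move=> [_ Gu GM GV] fcG.
have [X XG spanX] := exists_spanning_seq G.
pose conjs g := map (fun x => g *m x *m invmx g) X.
have [P conjsP] : exists P : seq (seq 'M[k]_n), forall g, G g -> conjs g \in P.
  by apply: finite_image_map => x xX; apply/fcG/XG.
have [r rG rep] := exists_representatives G conjs P.
exists r; split=> // g Gg.
have [b br conjs_b] := rep g Gg (conjsP g Gg).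
have Gb := rG b br.
exists b => //; split=> [|B GB]; first exact: GM (GV b Gb) Gg.
apply: comm_mx_span (spanX B GB) => x xX.
apply: conj_eq_comm_mx; rewrite ?Gu //.
by move/eq_in_map: conjs_b; apply.
Qed.

Lemma quotient_abelian_finite_conjugates G N x :
  subgroup_GL G -> finite_set N -> quotient_abelian G N -> G x ->
  finite_conjugates G x.
Proof.
move=> [_ Gu _ GV] [s Ns] abN Gx.
exists (map (mulmx x) s) => g Gg.
have := Ns _ (abN x (invmx g) Gx (GV g Gg)).
have [ux ug] := (Gu x Gx, Gu g Gg).
rewrite invmxM ?unitmx_inv // invmxK => /(map_f (mulmx x)).
by rewrite !mulmxA (mulmxV ux) mul1mx -mulmxA.
Qed.

End LinearGroups.

Theorem lemma2 (k : fieldType) (n : nat) (G : 'M[k]_n -> Prop) :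
  subgroup_GL G -> finite_by_abelian G -> virtually_abelian G.
Proof.
move=> subG [N [_ finN abN]].
exists (center_of G); split.
- exact: center_subgroup.
- exact: center_abelian.
- apply: center_finite_index => // x Gx.
  exact: quotient_abelian_finite_conjugates finN abN Gx.
Qed.
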